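(* Let $F$ be a field, $n$ a positive integer, and let $S\subseteq M_n(F)$ be a Clifford semigroup (under matrix multiplication) in which every matrix has rank $1$. Then $S$ is a commutative group, and for every matrix in $S$ all of its eigenvalues (in an algebraic closure of $F$) lie in $F$.
   Context: $M_n(F)$ denotes the set of $n\times n$ matrices over $F$. A Clifford semigroup is a completely regular inverse semigroup (equivalently, a regular semigroup whose idempotents are central). *)

From HB Require Import structures.
From mathcomp Require Import all_boot all_order all_algebra.
Set Implicit Arguments. Unset Strict Implicit. Unset Printing Implicit Defensive.
Import GRing.Theory.
Local Open Scope ring_scope.

Section Clifford.
Variables (F : fieldType) (n : nat).
Implicit Types (S : 'M[F]_n -> Prop).

Definition mx_semigroup S :=
  (exists A, S A) /\ (forall A B, S A -> S B -> S (A *m B)).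

Definition mx_regular S :=
  forall A, S A -> exists X, S X /\ A *m X *m A = A.

Definition mx_idempotents_central S :=
  forall E, S E -> E *m E = E -> forall A, S A -> E *m A = A *m E.

Definition mx_clifford_semigroup S :=
  [/\ mx_semigroup S, mx_regular S & mx_idempotents_central S].

Definition mx_commutative_group S :=
  exists E, [/\ S E,
    (forall A, S A -> E *m A = A /\ A *m E = A),
    (forall A, S A -> exists B, [/\ S B, A *m B = E & B *m A = E]) &
    (forall A B, S A -> S B -> A *m B = B *m A)].
End Clifford.

From HB Require Import structures.
From mathcomp Require Import all_boot all_order all_algebra.
Set Implicit Arguments.
Unset Strict Implicit.
Unset Printing Implicit Defensive.
Import GRing.Theory.
Local Open Scope ring_scope.

(* A rank-one matrix factors as C *m R through a single row/column, so
   A *m M *m A = (R *m M *m C) A is a scalar multiple of A.  In a Clifford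
   semigroup of rank-one matrices, this forces any two idempotents (which
   commute and have a nonzero product) to coincide, so the semigroup has a
   single idempotent E, is a group with identity E, and every element equals
   E *m A *m E, a scalar multiple of E: the group is commutative.  The only
   nonzero eigenvalue of C *m R is R *m C, i.e. the trace, which lies in F. *)

Section RankOne.
Variable F : fieldType.

Lemma mxrank1_factor m n (A : 'M[F]_(m, n)) :
  \rank A = 1%N -> exists (C : 'M[F]_(m, 1)) (R : 'M[F]_(1, n)), A = C *m R.
Proof.
move=> rkA; move: (col_base A) (row_base A) (mulmx_base A).
by rewrite rkA => C R <-; exists C, R.
Qed.

Lemma mxrank1_sandwich m n (A : 'M[F]_(m, n)) (M : 'M[F]_(n, m)) :
  \rank A = 1%N -> exists c : F, A *m M *m A = c *: A.
Proof.
move=> /mxrank1_factor [C [R ->]]; exists ((R *m M *m C) 0 0).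
have -> : C *m R *m M *m (C *m R) = C *m (R *m M *m C) *m R by rewrite !mulmxA.
by rewrite {1}(mx11_scalar (R *m M *m C)) mul_mx_scalar scalemxAl.
Qed.

Lemma eigenvalue_mxrank1 n (A : 'M[F]_n) x :
  \rank A = 1%N -> eigenvalue A x -> x = 0 \/ x = \tr A.
Proof.
move=> /mxrank1_factor [C [R ->]] /eigenvalueP [w wA w_neq0].
have [wC0 | wC_neq0] := eqVneq (w *m C) 0.
  left; apply/eqP; move: wA; rewrite mulmxA wC0 mul0mx => /esym/eqP.
  by rewrite scalemx_eq0 (negbTE w_neq0) orbF.
right; rewrite mxtrace_mulC trace_mx11.
have : w *m C *m (R *m C) = x *: (w *m C)
  by rewrite mulmxA -(mulmxA w) wA scalemxAl.
rewrite [in X in X -> _](mx11_scalar (R *m C)) mul_mx_scalar => /eqP.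
rewrite -subr_eq0 -scalerBl scalemx_eq0 (negbTE wC_neq0) orbF subr_eq0.
by rewrite eq_sym => /eqP.
Qed.

Lemma mxrank1_idem_mul n (P Q : 'M[F]_n) :
  \rank P = 1%N -> P *m P = P -> Q *m Q = Q -> P *m Q = Q *m P ->
  P *m Q != 0 -> P *m Q = P.
Proof.
move=> rkP PP QQ PQC PQ_neq0.
have [c Pc] := mxrank1_sandwich Q rkP.
have PQ_eq : P *m Q = c *: P.
  by rewrite -Pc -mulmxA -PQC mulmxA PP.
have PQ_idem : P *m Q *m (P *m Q) = P *m Q.
  by rewrite -mulmxA (mulmxA Q) -PQC -!mulmxA QQ mulmxA PP.
have P_neq0 : P != 0 by apply: contraNneq PQ_neq0 => ->; rewrite mul0mx.
have c_neq0 : c != 0 by apply: contraNneq PQ_neq0 => c0; rewrite PQ_eq c0 scale0r.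
move: PQ_idem; rewrite PQ_eq -scalemxAl -scalemxAr PP scalerA => /eqP.
rewrite -subr_eq0 -scalerBl scalemx_eq0 (negbTE P_neq0) orbF.
rewrite -[c in _ - c]mulr1 -mulrBr mulf_eq0 (negbTE c_neq0) subr_eq0 => /eqP c1.
by rewrite c1 scale1r.
Qed.

End RankOne.

Section RankOneClifford.
Variables (F : fieldType) (n : nat) (S : 'M[F]_n -> Prop).
Hypothesis S_mul : forall A B, S A -> S B -> S (A *m B).
Hypothesis S_regular : mx_regular S.
Hypothesis S_idem_central : mx_idempotents_central S.
Hypothesis S_rank1 : forall A, S A -> \rank A = 1%N.

Lemma clifford_rank1_neq0 A : S A -> A != 0.
Proof. by move=> SA; apply/eqP => A0; have := S_rank1 SA; rewrite A0 mxrank0. Qed.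

Lemma clifford_rank1_idem_unique P Q :
  S P -> P *m P = P -> S Q -> Q *m Q = Q -> P = Q.
Proof.
move=> SP PP SQ QQ.
have PQC := S_idem_central SP PP SQ.
have PQ_neq0 := clifford_rank1_neq0 (S_mul SP SQ).
rewrite -[LHS](mxrank1_idem_mul (S_rank1 SP) PP QQ PQC PQ_neq0) PQC.
by apply: mxrank1_idem_mul; rewrite ?S_rank1 // -PQC.
Qed.

Variable E : 'M[F]_n.
Hypotheses (SE : S E) (EE : E *m E = E).

Lemma clifford_rank1_regular_inverse A :
  S A -> exists X, [/\ S X, A *m X = E, X *m A = E & A *m X *m A = A].
Proof.
move=> SA; have [X [SX AXA]] := S_regular SA.
exists X; split=> //; apply: clifford_rank1_idem_unique => //; try exact: S_mul.
  by rewrite mulmxA AXA.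
by rewrite -mulmxA (mulmxA A) AXA.
Qed.

Lemma clifford_rank1_unit A : S A -> E *m A = A /\ A *m E = A.
Proof.
move=> SA; have [X [_ AX_E XA_E AXA]] := clifford_rank1_regular_inverse SA.
by split; [rewrite -AX_E | rewrite -XA_E mulmxA].
Qed.

Lemma clifford_rank1_scalar A : S A -> exists a : F, A = a *: E.
Proof.
move=> SA; have [a Ea] := mxrank1_sandwich A (S_rank1 SE).
have [EA AE] := clifford_rank1_unit SA.
by exists a; rewrite -Ea EA AE.
Qed.

Lemma clifford_rank1_commutative_group : mx_commutative_group S.
Proof.
exists E; split=> //.
- exact: clifford_rank1_unit.
- by move=> A /clifford_rank1_regular_inverse [X [SX AX XA _]]; exists X.
move=> A B /clifford_rank1_scalar [a ->] /clifford_rank1_scalar [b ->].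
by rewrite -!scalemxAl -!scalemxAr !scalerA EE mulrC.
Qed.

End RankOneClifford.

Lemma eigenvalue_map_mxrank1 (F L : fieldType) (f : {rmorphism F -> L}) n
    (A : 'M[F]_n) x :
  \rank A = 1%N -> eigenvalue (map_mx f A) x -> exists y : F, x = f y.
Proof.
rewrite -(mxrank_map f) => /eigenvalue_mxrank1 eig /eig [->|->].
  by exists 0; rewrite rmorph0.
by exists (\tr A); rewrite trace_map_mx.
Qed.

Theorem corollary2p4 (F : fieldType) (n : nat) (S : 'M[F]_n -> Prop) :
  (0 < n)%N ->
  mx_clifford_semigroup S ->
  (forall A, S A -> \rank A = 1%N) ->
  mx_commutative_group S /\
  (forall A, S A ->
     forall (L : closedFieldType) (f : {rmorphism F -> L}) (x : L),
       eigenvalue (map_mx f A) x -> exists y : F, x = f y).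
Proof.
move=> _ [[[A SA] S_mul] S_regular S_idem_central] S_rank1.
split; last by move=> B SB L f x; apply: eigenvalue_map_mxrank1; apply: S_rank1.
have [X [SX AXA]] := S_regular A SA.
apply: (clifford_rank1_commutative_group S_mul S_regular S_idem_central S_rank1
          (S_mul _ _ SA SX)).
by rewrite mulmxA AXA.
Qed.
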